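(* For $z\in(0,1)$ and $\rho>-1$ define $$g(z,\rho)=\frac{\rho}{1+\rho}+\frac{1-z+z^{1/(1+\rho)}-z^{\rho/(1+\rho)}}{(1+z)\ln z}.$$ Then $g(z,\rho)\ge0$ for all $z\in(0,1)$ and all $\rho>-1$.
   Context: $\ln$ denotes the natural logarithm. *)

From Stdlib Require Import Reals.
Open Scope R_scope.

Definition g (z rho : R) : R :=
  rho / (1 + rho)
  + (1 - z + Rpower z (1 / (1 + rho)) - Rpower z (rho / (1 + rho)))
    / ((1 + z) * ln z).

From Stdlib Require Import Reals Lra.
From Coquelicot Require Import Coquelicot.
Open Scope R_scope.

(* Fix z in (0,1) and rho > -1, put b = rho/(1+rho) and
   w = z^(-b).  Then z^(1/(1+rho)) = z^(1-b) = z*w and z^(rho/(1+rho)) = 1/w,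
   while ln w = -b ln z.  Hence, with phi z w := (1+z) ln w - (1 - z + z w - 1/w),
       g z rho = phi z w / (-(1+z) ln z),
   and the denominator is positive, so it suffices that phi z w >= 0.
   Since 1 - b = 1/(1+rho) > 0 we have z w = z^(1-b) < 1.  Now
       d/dw phi z w = (1 - z w)(w - 1) / w^2,
   so on the range 0 < w < 1/z the function phi z is nonincreasing before
   w = 1 and nondecreasing after it; its minimum is phi z 1 = 0.
   The file proves the two mean-value monotonicity facts, the sign analysis
   of phi, the algebraic identity for g, and finally the theorem. *)

Lemma le_of_deriv_nonneg (f f' : R -> R) (x y : R) :
  x < y ->
  (forall c, x <= c <= y -> derivable_pt_lim f c (f' c)) ->
  (forall c, x < c < y -> 0 <= f' c) ->
  f x <= f y.
Proof.
  intros Hxy Hder Hsign.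
  destruct (MVT_cor2 f f' x y Hxy Hder) as [c [Hmvt Hc]].
  assert (0 <= f' c * (y - x)) by (apply Rmult_le_pos; [apply Hsign; exact Hc | lra]).
  lra.
Qed.

Lemma le_of_deriv_nonpos (f f' : R -> R) (x y : R) :
  x < y ->
  (forall c, x <= c <= y -> derivable_pt_lim f c (f' c)) ->
  (forall c, x < c < y -> f' c <= 0) ->
  f y <= f x.
Proof.
  intros Hxy Hder Hsign.
  destruct (MVT_cor2 f f' x y Hxy Hder) as [c [Hmvt Hc]].
  assert (f' c * (y - x) <= 0)
    by (apply Rmult_le_0_r; [apply Hsign; exact Hc | lra]).
  lra.
Qed.

Definition phi (z w : R) : R := (1 + z) * ln w - (1 - z + z * w - / w).

(* Its derivative, in factored form: the sign is that of w - 1 when z w < 1. *)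
Definition phi' (z w : R) : R := (1 - z * w) * (w - 1) / (w * w).

Lemma phi_derivative (z w : R) : 0 < w -> derivable_pt_lim (phi z) w (phi' z w).
Proof.
  intros Hw. apply is_derive_Reals. unfold phi, phi'.
  auto_derive; [lra | field; lra].
Qed.

(* phi z attains its minimum 0 at w = 1 on the range 0 < w, z w < 1. *)
Lemma phi_nonneg (z w : R) : z <= 1 -> 0 < w -> z * w < 1 -> 0 <= phi z w.
Proof.
  intros Hz Hw Hzw.
  assert (Hphi1 : phi z 1 = 0) by (unfold phi; rewrite ln_1; field).
  assert (Hder : forall c, 0 < c -> derivable_pt_lim (phi z) c (phi' z c))
    by (intros c Hc; apply phi_derivative; exact Hc).
  destruct (Rtotal_order w 1) as [Hlt | [Heq | Hgt]].
  - rewrite <- Hphi1.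
    apply (le_of_deriv_nonpos (phi z) (phi' z) w 1 Hlt).
    + intros c Hc. apply Hder. lra.
    + intros c Hc. unfold phi', Rdiv.
      assert (0 < / (c * c)) by (apply Rinv_0_lt_compat; nra).
      assert (0 <= 1 - z * c) by nra.
      assert ((1 - z * c) * (c - 1) <= 0) by nra.
      nra.
  - subst w. lra.
  - rewrite <- Hphi1.
    apply (le_of_deriv_nonneg (phi z) (phi' z) 1 w Hgt).
    + intros c Hc. apply Hder. lra.
    + intros c Hc. unfold phi', Rdiv.
      assert (0 < / (c * c)) by (apply Rinv_0_lt_compat; nra).
      assert (0 <= 1 - z * c) by nra.
      apply Rmult_le_pos; [apply Rmult_le_pos |]; lra.
Qed.

Lemma ln_neg (z : R) : 0 < z < 1 -> ln z < 0.
Proof. intros Hz. rewrite <- ln_1. apply ln_increasing; lra. Qed.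

Lemma Rpower_lt_1 (z e : R) : 0 < z < 1 -> 0 < e -> Rpower z e < 1.
Proof.
  intros Hz He. unfold Rpower. rewrite <- exp_0. apply exp_increasing.
  pose proof (ln_neg z Hz). nra.
Qed.

Lemma Rpower_inv_succ (z rho : R) : 0 < z -> -1 < rho ->
  Rpower z (1 / (1 + rho)) = z * Rpower z (- (rho / (1 + rho))).
Proof.
  intros Hz Hr.
  replace (1 / (1 + rho)) with (1 + - (rho / (1 + rho))) by (field; lra).
  rewrite Rpower_plus, Rpower_1; [reflexivity | exact Hz].
Qed.

Lemma g_as_phi (z rho : R) : 0 < z < 1 -> -1 < rho ->
  let b := rho / (1 + rho) in
  let w := Rpower z (- b) in
  g z rho = phi z w / (- ((1 + z) * ln z)).
Proof.
  intros Hz Hr b w.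
  pose proof (ln_neg z Hz) as HL.
  assert (Hzw : Rpower z (1 / (1 + rho)) = z * w)
    by (apply Rpower_inv_succ; lra).
  assert (Hinv : Rpower z (rho / (1 + rho)) = / w)
    by (unfold w; rewrite Rpower_Ropp, Rinv_inv; reflexivity).
  assert (Hlnw : ln w = - b * ln z) by apply ln_Rpower.
  assert (Hw : 0 < w) by apply exp_pos.
  unfold g, phi. rewrite Hzw, Hinv, Hlnw. fold b.
  field. split; [lra | nra].
Qed.

Theorem mainTheorem3 : forall z rho : R, 0 < z < 1 -> -1 < rho -> 0 <= g z rho.
Proof.
  intros z rho Hz Hr.
  rewrite (g_as_phi z rho Hz Hr).
  set (b := rho / (1 + rho)). set (w := Rpower z (- b)).
  pose proof (ln_neg z Hz) as HL.
  assert (Hw : 0 < w) by apply exp_pos.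
  assert (Hzw : z * w < 1).
  { unfold w, b. rewrite <- Rpower_inv_succ by lra.
    apply Rpower_lt_1; [exact Hz | apply Rdiv_lt_0_compat; lra]. }
  apply Rdiv_le_0_compat.
  - apply phi_nonneg; lra.
  - nra.
Qed.
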